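(* Let $L$ be a pentagonal linkage and $X_k=\{P\in\overline{M^C}(L): |A_3A_5|=k\}$ a slice, parameterized on its relative interior by $x_2$, with prime denoting $d/dx_2$. Then on the relative interior of $X_k$ we have $(b_1)'<0$, $(b_3)'<0$ and $(b_5)'>0$; thus $b_1$ and $b_3$ are decreasing and $b_5$ is increasing in $x_2$.
   Context: A pentagonal linkage $L$ is given by side lengths $a_1,\dots,a_5>0$; $M(L)$ is the set of planar 5-gons $(A_1,\dots,A_5)$ with $|A_iA_{i+1}|=a_i$ (indices mod 5) modulo all isometries of $\mathbb{R}^2$; $M^C(L)$ is the set of strictly convex configurations (convex pentagon $A_1\dots A_5$ in this cyclic order, no angle equal to $\pi$) and $\overline{M^C}(L)$ its closure. $b_i=|A_{i-1}A_{i+1}|$, $x_i=b_i^2$ (indices mod 5). *)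

From Stdlib Require Import Reals Lra Lia ClassicalEpsilon.
Open Scope R_scope.

(* A planar pentagon: five vertices A1..A5 in R^2. Configurations are taken
   as vertex tuples; every quantity below is invariant under isometries of
   R^2, so working with representatives is harmless. *)
Record pent := Pent { A1 : R * R; A2 : R * R; A3 : R * R; A4 : R * R; A5 : R * R }.

(* vertex with index taken mod 5 (index 0 = index 5) *)
Definition vert (P : pent) (i : nat) : R * R :=
  match (i mod 5)%nat with
  | 1%nat => A1 P | 2%nat => A2 P | 3%nat => A3 P | 4%nat => A4 P | _ => A5 P
  end.

Definition dist (p q : R * R) : R :=
  sqrt ((fst p - fst q) ^ 2 + (snd p - snd q) ^ 2).

Definition orient (p q r : R * R) : R :=
  (fst q - fst p) * (snd r - snd p) - (snd q - snd p) * (fst r - fst p).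

Definition in_M (a : nat -> R) (P : pent) : Prop :=
  forall i : nat, (1 <= i <= 5)%nat -> dist (vert P i) (vert P (i + 1)) = a i.

(* strictly convex pentagon A1..A5 in this cyclic order, no angle equal to pi:
   for every edge A_i A_{i+1}, all the other three vertices lie strictly on
   the same side, the side being the same for all edges. *)
Definition strictly_convex (P : pent) : Prop :=
  (forall i j : nat, (1 <= i <= 5)%nat -> (2 <= j <= 4)%nat ->
      0 < orient (vert P i) (vert P (i + 1)) (vert P (i + j))) \/
  (forall i j : nat, (1 <= i <= 5)%nat -> (2 <= j <= 4)%nat ->
      orient (vert P i) (vert P (i + 1)) (vert P (i + j)) < 0).

Definition in_MC (a : nat -> R) (P : pent) : Prop := in_M a P /\ strictly_convex P.

(* b_i = |A_{i-1} A_{i+1}|,  x_i = b_i^2 *)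
Definition b (i : nat) (P : pent) : R := dist (vert P (i + 4)) (vert P (i + 1)).
Definition x (i : nat) (P : pent) : R := (b i P) ^ 2.

(* relative interior of the slice X_k = { P in closure(M^C) : |A3 A5| = k }:
   the strictly convex configurations with |A3 A5| = b_4 = k *)
Definition slice_int (a : nat -> R) (k : R) (P : pent) : Prop :=
  in_MC a P /\ b 4 P = k.

Definition origin_pent : pent := Pent (0,0) (0,0) (0,0) (0,0) (0,0).

(* the function b_i expressed in the parameter x_2 on the relative interior
   of X_k: its value at t is b_i of the (unique) configuration of the relative
   interior of X_k with x_2 = t *)
Definition b_of_x2 (a : nat -> R) (k : R) (i : nat) (t : R) : R :=
  b i (epsilon (inhabits origin_pent) (fun P => slice_int a k P /\ x 2 P = t)).

From Stdlib Require Import Reals Lra Lia Psatz Nsatz ClassicalEpsilon.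
From Coquelicot Require Import Coquelicot.
Open Scope R_scope.

(* Every configuration of the slice X_k is congruent to an explicit normal form
   [canon_pent t] with t = x2, A3 at the origin and A5 = (k, 0), whose coordinates
   are algebraic in t.  In this normal form (b1^2)' and (b3^2)' are negative multiples
   of the products of the orientations of the triangles A2A3A5, A1A2A5, resp.
   A1A2A5, A2A3A4, and (b5^2)' is a positive multiple of the orientation of A4A5A1;
   convexity makes all these orientations positive.
   Between two configurations with parameters t < t' the intermediate normal forms
   need not be convex, but the relevant orientations stay positive on [t, t']: at a
   first zero the diagonal would attain its triangle-inequality maximum
   (e.g. b1 = |A5A3| + |A3A2|), although it has decreased since t from a value
   below that maximum. *)

Lemma locally_pos (f : R -> R) t : continuous f t -> 0 < f t -> locally t (fun s => 0 < f s).
Proof. intros Hf Hpos. apply (Hf (fun y => 0 < y)). exact (open_gt 0 _ Hpos). Qed.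

Lemma locally_ball (P : R -> Prop) t :
  locally t P -> exists d, 0 < d /\ forall s, Rabs (s - t) < d -> P s.
Proof. intros [d Hd]. exists d. split; [apply cond_pos|]. intros s Hs. apply Hd. exact Hs. Qed.

Lemma nonneg_of_pos_before (g : R -> R) l c : l < c -> continuous g c ->
  (forall s, l <= s < c -> 0 < g s) -> 0 <= g c.
Proof.
intros Hlc Hg Hpos. apply Rnot_lt_le. intros Hneg.
assert (Hopp : continuous (fun s => - g s) c) by (apply (continuous_opp g); exact Hg).
destruct (locally_ball _ _ (locally_pos _ c Hopp ltac:(lra))) as (d & Hd & Hnear).
set (s := Rmax l (c - d / 2)).
assert (Hs : l <= s < c) by (unfold s; split; [apply Rmax_l|apply Rmax_lub_lt; lra]).
assert (c - d / 2 <= s) by apply Rmax_r.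
specialize (Hpos s Hs). specialize (Hnear s). rewrite Rabs_left1 in Hnear by lra. lra.
Qed.

Lemma first_exit (g1 g2 : R -> R) l u :
  (forall s, l <= s <= u -> continuous g1 s /\ continuous g2 s) ->
  0 < g1 l -> 0 < g2 l -> (exists s, l <= s <= u /\ ~ (0 < g1 s /\ 0 < g2 s)) ->
  exists c, l < c <= u /\ 0 <= g1 c /\ 0 <= g2 c /\ g1 c * g2 c = 0 /\
    forall s, l <= s < c -> 0 < g1 s /\ 0 < g2 s.
Proof.
intros Hcont H1l H2l Hexit.
set (E := fun s => l <= s <= u /\ forall r, l <= r <= s -> 0 < g1 r /\ 0 < g2 r).
assert (HEl : E l).
{ split; [destruct Hexit as (s & Hs & _); lra|]. intros r Hr. replace r with l by lra. auto. }
destruct (completeness E) as [c [Hub Hlub]]; [exists u; intros s [Hs _]; lra|exists l; exact HEl|].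
assert (Hlc : l <= c) by (apply Hub; exact HEl).
assert (Hcu : c <= u) by (apply Hlub; intros s [Hs _]; lra).
assert (Hbelow : forall s, l <= s < c -> 0 < g1 s /\ 0 < g2 s).
{ intros s Hs. apply NNPP. intros Hn. assert (c <= s); [|lra].
  apply Hlub. intros r [Hr Hpos]. destruct (Rle_or_lt r s) as [|Hsr]; auto.
  exfalso. apply Hn, Hpos. lra. }
destruct (Hcont c ltac:(lra)) as [Hc1 Hc2].
assert (Hstop : ~ (0 < g1 c /\ 0 < g2 c)).
{ intros [Hp1 Hp2].
  destruct (locally_ball _ _ (filter_and _ _ (locally_pos _ c Hc1 Hp1) (locally_pos _ c Hc2 Hp2)))
    as (d & Hd & Hnear).
  set (c' := Rmin u (c + d / 2)).
  assert (Hnear' : forall s, l <= s <= c' -> 0 < g1 s /\ 0 < g2 s).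
  { intros s Hs. destruct (Rlt_or_le s c); [apply Hbelow; lra|].
    apply Hnear. assert (s <= c + d / 2) by (eapply Rle_trans; [apply Hs|apply Rmin_r]).
    rewrite Rabs_right; lra. }
  destruct (Rlt_or_le c u) as [Hcu'|Hcu'].
  - assert (c < c') by (apply Rmin_glb_lt; lra).
    assert (c' <= c); [|lra].
    apply Hub. split; [split; [lra|apply Rmin_l]|exact Hnear'].
  - destruct Hexit as (s & Hs & Hn). apply Hn, Hnear'. split; [lra|]. apply Rmin_glb; lra. }
assert (Hlc' : l < c) by (destruct (Req_dec l c) as [<-|]; [tauto|lra]).
assert (G1c : 0 <= g1 c) by (apply (nonneg_of_pos_before g1 l); auto; apply Hbelow).
assert (G2c : 0 <= g2 c) by (apply (nonneg_of_pos_before g2 l); auto; apply Hbelow).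
exists c. repeat split; auto; try apply Hbelow; auto.
destruct (Req_dec (g1 c) 0) as [->|]; [ring|].
destruct (Req_dec (g2 c) 0) as [->|]; [ring|].
exfalso. apply Hstop. lra.
Qed.

Lemma decr_of_derive_neg (h dh : R -> R) l c : l < c ->
  (forall s, l <= s <= c -> is_derive h s (dh s)) -> (forall s, l < s < c -> dh s < 0) ->
  h c < h l.
Proof.
intros Hlc Hd Hneg.
destruct (MVT_cor2 h dh l c Hlc) as (xi & Hmvt & Hxi).
{ intros s Hs. apply is_derive_Reals, Hd, Hs. }
assert (dh xi * (c - l) < 0) by (apply Rmult_neg_pos; [apply Hneg, Hxi|lra]).
lra.
Qed.

Lemma positive_until_barrier (h dh g1 g2 : R -> R) l u :
  (forall s, l <= s <= u -> continuous g1 s /\ continuous g2 s) ->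
  (forall s, l <= s <= u -> is_derive h s (dh s)) ->
  (forall s, l <= s <= u -> 0 < g1 s -> 0 < g2 s -> dh s < 0) ->
  (forall s, l <= s <= u -> 0 <= g1 s -> 0 <= g2 s -> g1 s * g2 s = 0 -> h l <= h s) ->
  0 < g1 l -> 0 < g2 l ->
  forall s, l <= s <= u -> 0 < g1 s /\ 0 < g2 s.
Proof.
intros Hcont Hd Hneg Hbarrier H1l H2l s Hs. apply NNPP. intros Hn.
destruct (first_exit g1 g2 l u Hcont H1l H2l) as (c & Hc & G1c & G2c & Hz & Hbelow).
{ exists s. auto. }
assert (h c < h l).
{ apply (decr_of_derive_neg h dh); [lra| |].
  - intros r Hr. apply Hd. lra.
  - intros r Hr. destruct (Hbelow r ltac:(lra)). apply Hneg; auto; lra. }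
specialize (Hbarrier c ltac:(lra) G1c G2c Hz). lra.
Qed.

Lemma continuous_of_ex_derive (f : R -> R) t : ex_derive f t -> continuous f t.
Proof. exact (ex_derive_continuous f t). Qed.

Lemma continuity_pt_of_ex_derive (f : R -> R) t : ex_derive f t -> continuity_pt f t.
Proof. intros H. apply continuity_pt_filterlim, continuous_of_ex_derive, H. Qed.

Lemma locally_forall_lt (P : nat -> R -> Prop) t n :
  (forall i, (i < n)%nat -> locally t (P i)) ->
  locally t (fun s => forall i, (i < n)%nat -> P i s).
Proof.
induction n as [|n IH]; intros H.
- apply filter_forall. intros s i Hi. lia.
- apply filter_imp with (fun s => (forall i, (i < n)%nat -> P i s) /\ P n s).
  + intros s [Hlt Hn] i Hi. destruct (Nat.eq_dec i n) as [->|Hne]; [exact Hn|apply Hlt; lia].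
  + apply filter_and; [apply IH; intros i Hi|]; apply H; lia.
Qed.

Lemma is_derive_sqrt_same_sign (f g : R -> R) t df :
  locally t (fun s => sqrt (f s) = g s) -> is_derive f t df -> 0 < f t ->
  exists d, is_derive g t d /\ (df < 0 -> d < 0) /\ (0 < df -> 0 < d).
Proof.
intros Hloc Hf Hpos. exists (df / (2 * sqrt (f t))). split.
- apply (is_derive_ext_loc (fun s => sqrt (f s))); [exact Hloc|]. apply is_derive_sqrt; assumption.
- assert (0 < sqrt (f t)) by (apply sqrt_lt_R0; exact Hpos).
  split; intros; [apply Rdiv_neg_pos|apply Rdiv_lt_0_compat]; lra.
Qed.

Lemma is_derive_reflect (f : R -> R) c r df :
  is_derive f (c - r) df -> is_derive (fun s => f (c - s)) r (- df).
Proof.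
intros Hf.
assert (Hr : is_derive (fun s => c - s) r (-1)) by (auto_derive; [trivial|ring]).
pose proof (is_derive_comp f (fun s => c - s) r df (-1) Hf Hr) as H.
replace (- df) with (scal (-1) df); [exact H|]. unfold scal; simpl. unfold mult; simpl. ring.
Qed.

Lemma continuous_reflect (f : R -> R) c r :
  continuous f (c - r) -> continuous (fun s => f (c - s)) r.
Proof.
intros Hf. apply (continuous_comp (fun s => c - s) f); [|exact Hf].
apply continuous_of_ex_derive. auto_derive. trivial.
Qed.

Lemma sqrt_eq_sq X y : 0 <= y -> X = y ^ 2 -> sqrt X = y.
Proof. intros Hy ->. apply sqrt_pow2, Hy. Qed.

Lemma sqrt_pos_inv X : 0 < sqrt X -> 0 < X.
Proof. intros H. destruct (Rle_or_lt X 0) as [HX|HX]; auto. rewrite sqrt_neg_0 in H; lra. Qed.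

Lemma pos_of_div_pos x y : 0 < y -> 0 < x / y -> 0 < x.
Proof.
intros Hy H. replace x with (x / y * y) by (field; lra). apply Rmult_lt_0_compat; assumption.
Qed.

Lemma neq0_of_mul_pos e o : 0 < e * o -> o <> 0.
Proof. intros H ->. rewrite Rmult_0_r in H. lra. Qed.

Lemma concave_gram_pos m n p t1 t2 t : t1 <= t <= t2 ->
  0 < m * t1 - ((n + t1 - p) / 2) ^ 2 -> 0 < m * t2 - ((n + t2 - p) / 2) ^ 2 ->
  0 < m * t - ((n + t - p) / 2) ^ 2.
Proof.
intros Ht H1 H2. destruct (Req_dec t1 t2) as [<-|Hne]; [replace t with t1 by lra; exact H1|].
assert (Hid : (t2 - t1) * (m * t - ((n + t - p) / 2) ^ 2) =
  (t2 - t) * (m * t1 - ((n + t1 - p) / 2) ^ 2) + (t - t1) * (m * t2 - ((n + t2 - p) / 2) ^ 2) +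
  (t - t1) * (t2 - t) * (t2 - t1) / 4) by field.
assert (0 <= (t - t1) * (t2 - t) * (t2 - t1) / 4) by (repeat apply Rmult_le_pos; lra).
assert (0 < (t2 - t) * (m * t1 - ((n + t1 - p) / 2) ^ 2) +
  (t - t1) * (m * t2 - ((n + t2 - p) / 2) ^ 2))
  by (destruct (Req_dec t t1); [subst; nra|nra]).
nra.
Qed.

(* For a triangle with sides m, n enclosing an angle with cosine W / (m n) and sine
   G / (m n), the third side squared is m^2 + n^2 - 2 W: the triangle inequality and
   its equality case. *)
Lemma cosine_law_triangle m n W G : 0 < m -> 0 < n -> W ^ 2 + G ^ 2 = (m * n) ^ 2 ->
  m ^ 2 + n ^ 2 - 2 * W <= (m + n) ^ 2 /\ (G = 0 -> W < 0 -> m ^ 2 + n ^ 2 - 2 * W = (m + n) ^ 2).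
Proof.
intros Hm Hn HWG. assert (Hmn : 0 < m * n) by (apply Rmult_lt_0_compat; assumption).
split.
- assert (- (m * n) <= W) by nra. nra.
- intros -> HW. assert ((W + m * n) * (W - m * n) = 0) by nra.
  destruct (Rmult_integral _ _ H); nra.
Qed.

(* cos (u + v) < 0 if sin (u + v) = 0 and u, v lie in (0, pi). *)
Lemma cos_sum_neg_of_sin_sum_zero c1 s1 c2 s2 : 0 < s1 -> 0 < s2 ->
  c1 * s2 + c2 * s1 = 0 -> c1 * c2 - s1 * s2 < 0.
Proof.
intros H1 H2 Hsin. assert (c1 * c2 * (s1 * s2) = - (c1 * s2) ^ 2).
{ replace (c1 * c2 * (s1 * s2)) with ((c1 * s2) * (c2 * s1)) by ring.
  replace (c2 * s1) with (- (c1 * s2)) by lra. ring. }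
assert (0 < s1 * s2) by (apply Rmult_lt_0_compat; assumption). nra.
Qed.

Definition sq_dist (p q : R * R) : R := (fst p - fst q) ^ 2 + (snd p - snd q) ^ 2.

Lemma sq_dist_nonneg p q : 0 <= sq_dist p q.
Proof. unfold sq_dist. apply Rplus_le_le_0_compat; apply pow2_ge_0. Qed.

Lemma sq_dist_of_dist p q c : dist p q = c -> 0 < c -> sq_dist p q = c ^ 2.
Proof.
unfold dist. fold (sq_dist p q). intros <- Hc.
rewrite pow2_sqrt; [reflexivity|apply sq_dist_nonneg].
Qed.

Lemma sq_dist_pos_of_orient p q r : orient p q r <> 0 -> 0 < sq_dist q r.
Proof.
intros Ho. destruct (sq_dist_nonneg q r) as [|Hz]; [assumption|exfalso].
apply Ho. unfold sq_dist in Hz. unfold orient.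
destruct p as [p1 p2], q as [q1 q2], r as [r1 r2]; cbn [fst snd] in *.
destruct (Rplus_sqr_eq_0 (q1 - r1) (q2 - r2)) as [E1 E2].
{ unfold Rsqr. simpl in Hz. lra. }
replace q1 with r1 by lra. replace q2 with r2 by lra. ring.
Qed.

Lemma x2_sq_dist P : x 2 P = sq_dist (A1 P) (A3 P).
Proof. unfold x, b, dist. apply pow2_sqrt, sq_dist_nonneg. Qed.

(* The isometry taking O to the origin and U to (k, 0) when |OU| = k, followed by
   the reflection in the x-axis when e = -1. *)
Definition frame (e k : R) (O U X : R * R) : R * R :=
  (((fst X - fst O) * (fst U - fst O) + (snd X - snd O) * (snd U - snd O)) / k,
   e * ((fst U - fst O) * (snd X - snd O) - (snd U - snd O) * (fst X - fst O)) / k).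

Lemma sq_dist_frame e k O U X Y : (e = 1 \/ e = -1) -> 0 < k -> sq_dist O U = k ^ 2 ->
  sq_dist (frame e k O U X) (frame e k O U Y) = sq_dist X Y.
Proof.
intros He Hk Hu. unfold sq_dist, frame in *; cbn [fst snd] in *.
destruct O as [o1 o2], U as [u1 u2], X as [x1 x2], Y as [y1 y2]; cbn [fst snd] in *.
transitivity (((x1 - y1) ^ 2 + (x2 - y2) ^ 2) * ((o1 - u1) ^ 2 + (o2 - u2) ^ 2) / k ^ 2).
- destruct He; subst e; field; lra.
- rewrite Hu. field; lra.
Qed.

Lemma orient_frame e k O U X Y Z : (e = 1 \/ e = -1) -> 0 < k -> sq_dist O U = k ^ 2 ->
  orient (frame e k O U X) (frame e k O U Y) (frame e k O U Z) = e * orient X Y Z.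
Proof.
intros He Hk Hu. unfold sq_dist, orient, frame in *; cbn [fst snd] in *.
destruct O as [o1 o2], U as [u1 u2], X as [x1 x2], Y as [y1 y2], Z as [z1 z2]; cbn [fst snd] in *.
transitivity (e * ((y1 - x1) * (z2 - x2) - (y2 - x2) * (z1 - x1)) *
  ((o1 - u1) ^ 2 + (o2 - u2) ^ 2) / k ^ 2).
- destruct He; subst e; field; lra.
- rewrite Hu. field; lra.
Qed.

Lemma continuity_pt_orient (p q r : R -> R * R) t :
  continuity_pt (fun s => fst (p s)) t -> continuity_pt (fun s => snd (p s)) t ->
  continuity_pt (fun s => fst (q s)) t -> continuity_pt (fun s => snd (q s)) t ->
  continuity_pt (fun s => fst (r s)) t -> continuity_pt (fun s => snd (r s)) t ->
  continuity_pt (fun s => orient (p s) (q s) (r s)) t.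
Proof.
intros. unfold orient.
apply continuity_pt_minus; apply continuity_pt_mult; apply continuity_pt_minus; assumption.
Qed.

Definition convex_ccw (C : pent) : Prop :=
  forall i j : nat, (1 <= i <= 5)%nat -> (2 <= j <= 4)%nat ->
    0 < orient (vert C i) (vert C (i + 1)) (vert C (i + j)).

Lemma strictly_convex_sign P : strictly_convex P ->
  exists e, (e = 1 \/ e = -1) /\ forall i j : nat, (1 <= i <= 5)%nat -> (2 <= j <= 4)%nat ->
    0 < e * orient (vert P i) (vert P (i + 1)) (vert P (i + j)).
Proof.
intros [H|H]; [exists 1|exists (-1)]; split; auto; intros i j Hi Hj; specialize (H i j Hi Hj); lra.
Qed.

Section Canonical.

Variables (a : nat -> R) (k : R).
Hypothesis a_pos : forall i : nat, (1 <= i <= 5)%nat -> 0 < a i.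

Local Notation a1 := (a 1%nat).
Local Notation a2 := (a 2%nat).
Local Notation a3 := (a 3%nat).
Local Notation a4 := (a 4%nat).
Local Notation a5 := (a 5%nat).

(* The normal form has A3 = (0, 0), A5 = (k, 0) and t = |A1A3|^2.  By the law of
   cosines c51, c12, c54 are the dot products at A3 of the sides towards A5 and A1,
   A1 and A2, A5 and A4; s51, s12, s54 are the corresponding cross products (twice
   the areas), recovered from the Gram determinants. *)
Definition c51 t := (k ^ 2 + t - a5 ^ 2) / 2.
Definition c12 t := (a2 ^ 2 + t - a1 ^ 2) / 2.
Definition c54 := (a3 ^ 2 + k ^ 2 - a4 ^ 2) / 2.
Definition gram51 t := k ^ 2 * t - c51 t ^ 2.
Definition gram12 t := a2 ^ 2 * t - c12 t ^ 2.
Definition gram54 := a3 ^ 2 * k ^ 2 - c54 ^ 2.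
Definition s51 t := sqrt (gram51 t).
Definition s12 t := sqrt (gram12 t).
Definition s54 := sqrt gram54.

Definition canon_pent t : pent :=
  Pent (c51 t / k, s51 t / k)
       ((c12 t * c51 t - s12 t * s51 t) / (k * t), (c12 t * s51 t + s12 t * c51 t) / (k * t))
       (0, 0) (c54 / k, - s54 / k) (k, 0).

Definition c52 t := (c12 t * c51 t - s51 t * s12 t) / t.
Definition s52 t := (c12 t * s51 t + s12 t * c51 t) / t.
Definition b1_sq t := k ^ 2 + a2 ^ 2 - 2 * c52 t.
Definition b3_sq t := a3 ^ 2 + a2 ^ 2 - 2 * ((c54 * c52 t - s54 * s52 t) / k ^ 2).
Definition b5_sq t := a3 ^ 2 + t - 2 * ((c54 * c51 t - s54 * s51 t) / k ^ 2).

(* Up to positive factors, the orientations of the triangles A2A3A5, A1A2A5, A4A5A1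
   and A2A3A4 of [canon_pent t], see [canon_orient]. *)
Definition o235 t := c12 t * s51 t + c51 t * s12 t.
Definition o125 t := (t - c51 t) * s12 t + (t - c12 t) * s51 t.
Definition o451 t := (k ^ 2 - c54) * s51 t + s54 * (k ^ 2 - c51 t).
Definition o234 t := c54 * o235 t + s54 * (c12 t * c51 t - s51 t * s12 t).

Lemma s52_o235 t : s52 t = o235 t / t.
Proof. unfold s52, o235. f_equal. ring. Qed.

Lemma s51_sq t : 0 <= gram51 t -> s51 t ^ 2 = gram51 t.
Proof. apply pow2_sqrt. Qed.
Lemma s12_sq t : 0 <= gram12 t -> s12 t ^ 2 = gram12 t.
Proof. apply pow2_sqrt. Qed.
Lemma s54_sq : 0 <= gram54 -> s54 ^ 2 = gram54.
Proof. apply pow2_sqrt. Qed.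

Lemma s51_pos t : 0 < gram51 t -> 0 < s51 t.
Proof. apply sqrt_lt_R0. Qed.
Lemma s12_pos t : 0 < gram12 t -> 0 < s12 t.
Proof. apply sqrt_lt_R0. Qed.
Lemma s54_pos : 0 < gram54 -> 0 < s54.
Proof. apply sqrt_lt_R0. Qed.

(* Turn s51 t (etc.) into an opaque unknown subject to its defining polynomial relation,
   so that [nsatz] can use it. *)
Ltac expand_gram51 t H :=
  pose proof (s51_sq t H) as Hs; set (s1 := s51 t) in *;
  assert (4 * s1 ^ 2 = 4 * k ^ 2 * t - (k ^ 2 + t - a5 ^ 2) ^ 2)
    by (rewrite Hs; unfold gram51, c51; field);
  clear Hs; unfold gram51, c51 in *.

Ltac expand_gram12 t H :=
  pose proof (s12_sq t H) as Hs; set (s2 := s12 t) in *;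
  assert (4 * s2 ^ 2 = 4 * a2 ^ 2 * t - (a2 ^ 2 + t - a1 ^ 2) ^ 2)
    by (rewrite Hs; unfold gram12, c12; field);
  clear Hs; unfold gram12, c12 in *.

Ltac expand_gram54 H :=
  pose proof (s54_sq H) as Hs; set (s3 := s54) in *;
  assert (4 * s3 ^ 2 = 4 * a3 ^ 2 * k ^ 2 - (a3 ^ 2 + k ^ 2 - a4 ^ 2) ^ 2)
    by (rewrite Hs; unfold gram54, c54; field);
  clear Hs; unfold gram54, c54 in *.

Ltac expand_grams t H1 H2 H3 := expand_gram51 t H1; expand_gram12 t H2; expand_gram54 H3.

Ltac rewrite_Derive E :=
  match type of E with
  | is_derive ?f ?x ?l =>
      first [ rewrite (is_derive_unique f x l E)
            | replace (Derive (fun y => f y) x) with l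
                by (symmetry; apply is_derive_unique; exact E) ]
  end.

Ltac alg_eq := field_simplify_eq; [simpl in *; nsatz | ..].

Lemma canon_sides t : 0 < k -> 0 < t -> 0 <= gram51 t -> 0 <= gram12 t -> 0 <= gram54 ->
  let C := canon_pent t in
  sq_dist (A1 C) (A2 C) = a1 ^ 2 /\ sq_dist (A2 C) (A3 C) = a2 ^ 2 /\
  sq_dist (A3 C) (A4 C) = a3 ^ 2 /\ sq_dist (A4 C) (A5 C) = a4 ^ 2 /\
  sq_dist (A5 C) (A1 C) = a5 ^ 2 /\ sq_dist (A1 C) (A3 C) = t.
Proof.
intros Hk Ht H1 H2 H3.
unfold canon_pent, sq_dist; cbn [fst snd A1 A2 A3 A4 A5].
expand_grams t H1 H2 H3.
repeat split; alg_eq; repeat split; try apply pow_nonzero; lra.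
Qed.

Lemma canon_diagonals t : 0 < k -> 0 < t -> 0 <= gram51 t -> 0 <= gram12 t -> 0 <= gram54 ->
  let C := canon_pent t in
  sq_dist (A5 C) (A2 C) = b1_sq t /\ sq_dist (A2 C) (A4 C) = b3_sq t /\
  sq_dist (A4 C) (A1 C) = b5_sq t.
Proof.
intros Hk Ht H1 H2 H3.
unfold canon_pent, sq_dist, b1_sq, b3_sq, b5_sq, c52, s52; cbn [fst snd A1 A2 A3 A4 A5].
expand_grams t H1 H2 H3.
repeat split; alg_eq; repeat split; try apply pow_nonzero; lra.
Qed.

Lemma canon_orient t : 0 < k -> 0 < t -> 0 <= gram51 t -> 0 <= gram12 t -> 0 <= gram54 ->
  let C := canon_pent t in
  orient (A5 C) (A1 C) (A3 C) = s51 t /\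
  orient (A1 C) (A2 C) (A3 C) = s12 t /\
  orient (A3 C) (A4 C) (A5 C) = s54 /\
  orient (A2 C) (A3 C) (A5 C) = o235 t / t /\
  orient (A1 C) (A2 C) (A5 C) = o125 t / t /\
  orient (A4 C) (A5 C) (A1 C) = o451 t / k ^ 2 /\
  orient (A2 C) (A3 C) (A4 C) = o234 t / (k ^ 2 * t).
Proof.
intros Hk Ht H1 H2 H3.
unfold canon_pent, orient, o234, o235, o125, o451; cbn [fst snd A1 A2 A3 A4 A5].
expand_grams t H1 H2 H3.
repeat split; [alg_eq; lra ..| field; lra].
Qed.

Lemma canon_convex_pos t : 0 < k -> 0 < t -> convex_ccw (canon_pent t) ->
  0 < gram51 t /\ 0 < gram12 t /\ 0 < gram54 /\
  0 < o235 t /\ 0 < o125 t /\ 0 < o451 t /\ 0 < o234 t.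
Proof.
intros Hk Ht Hc.
set (C := canon_pent t).
assert (O1 : 0 < orient (A5 C) (A1 C) (A3 C)) by exact (Hc 5%nat 3%nat ltac:(lia) ltac:(lia)).
assert (O2 : 0 < orient (A1 C) (A2 C) (A3 C)) by exact (Hc 1%nat 2%nat ltac:(lia) ltac:(lia)).
assert (O3 : 0 < orient (A3 C) (A4 C) (A5 C)) by exact (Hc 3%nat 2%nat ltac:(lia) ltac:(lia)).
assert (O4 : 0 < orient (A2 C) (A3 C) (A5 C)) by exact (Hc 2%nat 3%nat ltac:(lia) ltac:(lia)).
assert (O5 : 0 < orient (A1 C) (A2 C) (A5 C)) by exact (Hc 1%nat 4%nat ltac:(lia) ltac:(lia)).
assert (O6 : 0 < orient (A4 C) (A5 C) (A1 C)) by exact (Hc 4%nat 2%nat ltac:(lia) ltac:(lia)).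
assert (O7 : 0 < orient (A2 C) (A3 C) (A4 C)) by exact (Hc 2%nat 2%nat ltac:(lia) ltac:(lia)).
assert (G1 : 0 < gram51 t).
{ apply sqrt_pos_inv. fold (s51 t). replace (s51 t) with (orient (A5 C) (A1 C) (A3 C)); auto.
  unfold C, orient, canon_pent; cbn [fst snd A1 A2 A3 A4 A5]. field; lra. }
assert (G3 : 0 < gram54).
{ apply sqrt_pos_inv. fold s54. replace s54 with (orient (A3 C) (A4 C) (A5 C)); auto.
  unfold C, orient, canon_pent; cbn [fst snd A1 A2 A3 A4 A5]. field; lra. }
assert (G2 : 0 < gram12 t).
{ apply sqrt_pos_inv. fold (s12 t). replace (s12 t) with (orient (A1 C) (A2 C) (A3 C)); auto.
  pose proof (s51_sq t ltac:(lra)) as Q1. unfold gram51 in Q1.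
  unfold C, orient, canon_pent; cbn [fst snd A1 A2 A3 A4 A5].
  apply Rmult_eq_reg_r with (k ^ 2 * t);
    [|apply Rmult_integral_contrapositive; split; try apply pow_nonzero; lra].
  transitivity (s12 t * (c51 t ^ 2 + s51 t ^ 2)); [field; lra|]. rewrite Q1. field. }
destruct (canon_orient t Hk Ht ltac:(lra) ltac:(lra) ltac:(lra))
  as (_ & _ & _ & E4 & E5 & E6 & E7).
fold C in E4, E5, E6, E7. rewrite E4 in O4. rewrite E5 in O5. rewrite E6 in O6. rewrite E7 in O7.
assert (Hk2 : 0 < k ^ 2) by (apply pow_lt; lra).
assert (Hk2t : 0 < k ^ 2 * t) by (apply Rmult_lt_0_compat; lra).
repeat split; auto.
- exact (pos_of_div_pos _ _ Ht O4).
- exact (pos_of_div_pos _ _ Ht O5).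
- exact (pos_of_div_pos _ _ Hk2 O6).
- exact (pos_of_div_pos _ _ Hk2t O7).
Qed.

Lemma is_derive_s51 t : 0 < gram51 t -> is_derive s51 t ((k ^ 2 - c51 t) / (2 * s51 t)).
Proof.
intros Hg. apply (is_derive_sqrt gram51); [|exact Hg].
unfold gram51, c51. auto_derive; [trivial|field].
Qed.

Lemma is_derive_s12 t : 0 < gram12 t -> is_derive s12 t ((a2 ^ 2 - c12 t) / (2 * s12 t)).
Proof.
intros Hg. apply (is_derive_sqrt gram12); [|exact Hg].
unfold gram12, c12. auto_derive; [trivial|field].
Qed.

Lemma is_derive_c52 t : 0 < t -> 0 < gram51 t -> 0 < gram12 t ->
  is_derive c52 t (o235 t * o125 t / (2 * t ^ 2 * s51 t * s12 t)).
Proof.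
intros Ht Hg1 Hg2.
pose proof (is_derive_s51 t Hg1) as E1. pose proof (is_derive_s12 t Hg2) as E2.
pose proof (s51_pos t Hg1) as P1.
pose proof (s12_pos t Hg2) as P2.
unfold c52, c51, c12. auto_derive.
- repeat split; try lra; eexists; eauto.
- rewrite_Derive E1; rewrite_Derive E2.
  unfold o235, o125.
  expand_gram51 t (Rlt_le _ _ Hg1). expand_gram12 t (Rlt_le _ _ Hg2).
  alg_eq; repeat split; lra.
Qed.

Lemma is_derive_s52 t : 0 < t -> 0 < gram51 t -> 0 < gram12 t ->
  is_derive s52 t
    (- ((c12 t * c51 t - s51 t * s12 t) * o125 t) / (2 * t ^ 2 * s51 t * s12 t)).
Proof.
intros Ht Hg1 Hg2.
pose proof (is_derive_s51 t Hg1) as E1. pose proof (is_derive_s12 t Hg2) as E2.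
pose proof (s51_pos t Hg1) as P1.
pose proof (s12_pos t Hg2) as P2.
unfold s52, c51, c12. auto_derive.
- repeat split; try lra; eexists; eauto.
- rewrite_Derive E1; rewrite_Derive E2.
  unfold o125.
  expand_gram51 t (Rlt_le _ _ Hg1). expand_gram12 t (Rlt_le _ _ Hg2).
  alg_eq; repeat split; lra.
Qed.

Definition d_b1_sq t := - (o235 t * o125 t) / (t ^ 2 * s51 t * s12 t).
Definition d_b3_sq t := - (o125 t * o234 t) / (k ^ 2 * t ^ 2 * s51 t * s12 t).
Definition d_b5_sq t := o451 t / (k ^ 2 * s51 t).

Lemma is_derive_b1_sq t : 0 < t -> 0 < gram51 t -> 0 < gram12 t -> is_derive b1_sq t (d_b1_sq t).
Proof.
intros Ht Hg1 Hg2. pose proof (is_derive_c52 t Ht Hg1 Hg2) as E.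
pose proof (s51_pos t Hg1) as P1.
pose proof (s12_pos t Hg2) as P2.
unfold b1_sq. auto_derive.
- eexists; exact E.
- rewrite_Derive E. unfold d_b1_sq. field. lra.
Qed.

Lemma is_derive_b3_sq t : 0 < k -> 0 < t -> 0 < gram51 t -> 0 < gram12 t ->
  is_derive b3_sq t (d_b3_sq t).
Proof.
intros Hk Ht Hg1 Hg2.
pose proof (is_derive_c52 t Ht Hg1 Hg2) as E. pose proof (is_derive_s52 t Ht Hg1 Hg2) as E'.
pose proof (s51_pos t Hg1) as P1.
pose proof (s12_pos t Hg2) as P2.
unfold b3_sq. auto_derive.
- repeat split; eexists; eassumption.
- rewrite_Derive E; rewrite_Derive E'.
  unfold d_b3_sq, o234. field. lra.
Qed.

Lemma is_derive_b5_sq t : 0 < k -> 0 < gram51 t -> is_derive b5_sq t (d_b5_sq t).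
Proof.
intros Hk Hg1. pose proof (is_derive_s51 t Hg1) as E.
pose proof (s51_pos t Hg1) as P1.
unfold b5_sq, c51. auto_derive.
- repeat split; eexists; exact E.
- rewrite_Derive E. unfold d_b5_sq, o451, c51, c54. field. lra.
Qed.

Lemma d_b1_sq_neg t : 0 < t -> 0 < gram51 t -> 0 < gram12 t -> 0 < o235 t -> 0 < o125 t ->
  d_b1_sq t < 0.
Proof.
intros Ht Hg1 Hg2 Ho1 Ho2. pose proof (s51_pos t Hg1). pose proof (s12_pos t Hg2).
unfold d_b1_sq.
apply Rdiv_neg_pos; [|repeat apply Rmult_lt_0_compat; try apply pow_lt]; nra.
Qed.

Lemma d_b3_sq_neg t : 0 < k -> 0 < t -> 0 < gram51 t -> 0 < gram12 t -> 0 < o125 t -> 0 < o234 t ->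
  d_b3_sq t < 0.
Proof.
intros Hk Ht Hg1 Hg2 Ho1 Ho2. pose proof (s51_pos t Hg1). pose proof (s12_pos t Hg2).
unfold d_b3_sq.
apply Rdiv_neg_pos; [|repeat apply Rmult_lt_0_compat; try apply pow_lt]; nra.
Qed.

Lemma d_b5_sq_pos t : 0 < k -> 0 < gram51 t -> 0 < o451 t -> 0 < d_b5_sq t.
Proof.
intros Hk Hg1 Ho. pose proof (s51_pos t Hg1). unfold d_b5_sq.
apply Rdiv_lt_0_compat; [|apply Rmult_lt_0_compat; try apply pow_lt]; assumption.
Qed.

Lemma b1_sq_triangle_A3 t : 0 < k -> 0 < t -> 0 < gram51 t -> 0 < gram12 t ->
  b1_sq t <= (k + a2) ^ 2 /\ (o235 t = 0 -> b1_sq t = (k + a2) ^ 2).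
Proof.
intros Hk Ht Hg1 Hg2.
pose proof (s51_pos t Hg1) as P1.
pose proof (s12_pos t Hg2) as P2.
destruct (cosine_law_triangle k a2 (c52 t) (s52 t) Hk (a_pos 2%nat ltac:(lia))) as [Hle Heq].
{ unfold c52, s52. expand_gram51 t (Rlt_le _ _ Hg1). expand_gram12 t (Rlt_le _ _ Hg2).
  alg_eq; lra. }
split; [exact Hle|]. intros Ho. apply Heq.
- rewrite s52_o235, Ho. apply Rdiv_0_l.
- assert (c12 t * c51 t - s12 t * s51 t < 0).
  { apply cos_sum_neg_of_sin_sum_zero; assumption. }
  unfold c52. apply Rdiv_neg_pos; [lra|exact Ht].
Qed.

Lemma b1_sq_triangle_A1 t : 0 < t -> 0 < gram51 t -> 0 < gram12 t ->
  b1_sq t <= (a1 + a5) ^ 2 /\ (o125 t = 0 -> b1_sq t = (a1 + a5) ^ 2).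
Proof.
intros Ht Hg1 Hg2.
pose proof (s51_pos t Hg1) as P1.
pose proof (s12_pos t Hg2) as P2.
set (W := ((t - c51 t) * (t - c12 t) - s51 t * s12 t) / t).
assert (Hb : b1_sq t = a1 ^ 2 + a5 ^ 2 - 2 * W) by (unfold b1_sq, c52, W, c51, c12; field; lra).
destruct (cosine_law_triangle a1 a5 W (o125 t / t) (a_pos 1%nat ltac:(lia))
  (a_pos 5%nat ltac:(lia))) as [Hle Heq].
{ unfold W, o125. expand_gram51 t (Rlt_le _ _ Hg1). expand_gram12 t (Rlt_le _ _ Hg2).
  alg_eq; lra. }
rewrite Hb. split; [exact Hle|]. intros Ho. apply Heq.
- rewrite Ho. apply Rdiv_0_l.
- apply Rdiv_neg_pos; [apply cos_sum_neg_of_sin_sum_zero; assumption|exact Ht].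
Qed.

Lemma b3_sq_triangle_A3 t : 0 < k -> 0 < t -> 0 < gram51 t -> 0 < gram12 t -> 0 < gram54 ->
  0 < o235 t -> b3_sq t <= (a2 + a3) ^ 2 /\ (o234 t = 0 -> b3_sq t = (a2 + a3) ^ 2).
Proof.
intros Hk Ht Hg1 Hg2 Hg3 Ho235.
pose proof (s54_pos Hg3) as P3.
assert (P52 : 0 < s52 t) by (rewrite s52_o235; apply Rdiv_lt_0_compat; assumption).
assert (Hk2 : 0 < k ^ 2) by (apply pow_lt; exact Hk).
set (W := (c54 * c52 t - s54 * s52 t) / k ^ 2).
assert (Hb : b3_sq t = a2 ^ 2 + a3 ^ 2 - 2 * W) by (unfold b3_sq, W; ring).
assert (Ho : o234 t = t * (c54 * s52 t + c52 t * s54)) by (unfold o234, o235, c52, s52; field; lra).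
destruct (cosine_law_triangle a2 a3 W (o234 t / (k ^ 2 * t)) (a_pos 2%nat ltac:(lia))
  (a_pos 3%nat ltac:(lia))) as [Hle Heq].
{ unfold W, o234, o235, c52, s52.
  expand_grams t (Rlt_le _ _ Hg1) (Rlt_le _ _ Hg2) (Rlt_le _ _ Hg3).
  alg_eq; repeat split; try apply pow_nonzero; lra. }
rewrite Hb. split; [exact Hle|]. intros Hz. apply Heq.
- rewrite Hz. apply Rdiv_0_l.
- apply Rdiv_neg_pos; [|exact Hk2]. apply cos_sum_neg_of_sin_sum_zero; try assumption.
  rewrite Ho in Hz. destruct (Rmult_integral _ _ Hz); lra.
Qed.

Lemma b5_sq_triangle_A5 t : 0 < k -> 0 < gram51 t -> 0 < gram54 ->
  b5_sq t <= (a4 + a5) ^ 2 /\ (o451 t = 0 -> b5_sq t = (a4 + a5) ^ 2).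
Proof.
intros Hk Hg1 Hg3.
pose proof (s51_pos t Hg1) as P1.
pose proof (s54_pos Hg3) as P3.
assert (Hk2 : 0 < k ^ 2) by (apply pow_lt; exact Hk).
set (W := ((k ^ 2 - c54) * (k ^ 2 - c51 t) - s54 * s51 t) / k ^ 2).
assert (Hb : b5_sq t = a4 ^ 2 + a5 ^ 2 - 2 * W) by (unfold b5_sq, W, c51, c54; field; lra).
destruct (cosine_law_triangle a4 a5 W (o451 t / k ^ 2) (a_pos 4%nat ltac:(lia))
  (a_pos 5%nat ltac:(lia))) as [Hle Heq].
{ unfold W, o451. expand_gram51 t (Rlt_le _ _ Hg1). expand_gram54 (Rlt_le _ _ Hg3).
  alg_eq; lra. }
rewrite Hb. split; [exact Hle|]. intros Ho. apply Heq.
- rewrite Ho. apply Rdiv_0_l.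
- apply Rdiv_neg_pos; [|exact Hk2]. apply cos_sum_neg_of_sin_sum_zero; try assumption.
  unfold o451 in Ho. lra.
Qed.

Lemma in_M_sq_sides P : in_M a P ->
  sq_dist (A1 P) (A2 P) = a1 ^ 2 /\ sq_dist (A2 P) (A3 P) = a2 ^ 2 /\
  sq_dist (A3 P) (A4 P) = a3 ^ 2 /\ sq_dist (A4 P) (A5 P) = a4 ^ 2 /\
  sq_dist (A5 P) (A1 P) = a5 ^ 2.
Proof.
intros HM.
repeat split; apply sq_dist_of_dist; try apply a_pos; try lia;
  [exact (HM 1%nat ltac:(lia)) | exact (HM 2%nat ltac:(lia)) | exact (HM 3%nat ltac:(lia))
  | exact (HM 4%nat ltac:(lia)) | exact (HM 5%nat ltac:(lia))].
Qed.

(* The sign conditions fix the signs of the square roots s51, s12 and s54. *)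
Lemma canon_eq_frame P e : (e = 1 \/ e = -1) -> in_M a P -> 0 < k ->
  sq_dist (A3 P) (A5 P) = k ^ 2 -> 0 < e * orient (A5 P) (A1 P) (A3 P) ->
  0 < e * orient (A1 P) (A2 P) (A3 P) -> 0 < e * orient (A3 P) (A4 P) (A5 P) ->
  forall n, vert (canon_pent (x 2 P)) n = frame e k (A3 P) (A5 P) (vert P n).
Proof.
intros He HM Hk Hk2 O1 O2 O3.
assert (Ht : 0 < x 2 P).
{ rewrite x2_sq_dist. apply (sq_dist_pos_of_orient (A5 P)). exact (neq0_of_mul_pos e _ O1). }
rewrite x2_sq_dist in *. destruct (in_M_sq_sides P HM) as (E1 & E2 & E3 & E4 & E5).
destruct P as [[x1 y1] [x2 y2] [x3 y3] [x4 y4] [x5 y5]].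
unfold sq_dist, orient in *; cbn [fst snd A1 A2 A3 A4 A5] in *.
set (t := (x1 - x3) ^ 2 + (y1 - y3) ^ 2) in *.
symmetry in Hk2, E1, E2, E3, E4, E5.
assert (HS1 : s51 t = e * ((x5 - x3) * (y1 - y3) - (y5 - y3) * (x1 - x3))).
{ apply sqrt_eq_sq; [nra|]. unfold gram51, c51. rewrite Hk2, E5. unfold t.
  destruct He; subst e; field. }
assert (HS2 : s12 t = e * ((x1 - x3) * (y2 - y3) - (y1 - y3) * (x2 - x3))).
{ apply sqrt_eq_sq; [nra|]. unfold gram12, c12. rewrite E1, E2. unfold t.
  destruct He; subst e; field. }
assert (HS3 : s54 = - e * ((x5 - x3) * (y4 - y3) - (y5 - y3) * (x4 - x3))).
{ apply sqrt_eq_sq; [nra|]. unfold gram54, c54. rewrite Hk2, E3, E4.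
  destruct He; subst e; field. }
assert (Hk0 : k <> 0) by lra. assert (Ht0 : t <> 0) by lra.
intro n. unfold vert, canon_pent, frame. cbn [fst snd A1 A2 A3 A4 A5].
destruct (n mod 5)%nat as [|[|[|[|[|m]]]]]; cbn [fst snd A1 A2 A3 A4 A5];
  apply pair_equal_spec; split.
- apply Rmult_eq_reg_r with k; auto. field_simplify; auto. rewrite Hk2; ring.
- unfold Rdiv; ring.
- unfold c51. rewrite Hk2, E5. unfold t. field; auto.
- rewrite HS1. reflexivity.
- rewrite HS1, HS2. unfold c51, c12. rewrite Hk2, E5, E1, E2. unfold t.
  destruct He; subst e; field; auto.
- rewrite HS1, HS2. unfold c51, c12. rewrite Hk2, E5, E1, E2. unfold t.
  destruct He; subst e; field; auto.
- unfold Rdiv; ring.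
- unfold Rdiv; ring.
- unfold c54. rewrite Hk2, E3, E4. field; auto.
- rewrite HS3. field; auto.
- apply Rmult_eq_reg_r with k; auto. field_simplify; auto. rewrite Hk2; ring.
- unfold Rdiv; ring.
Qed.

Lemma slice_canon P : slice_int a k P ->
  0 < k /\ 0 < x 2 P /\ convex_ccw (canon_pent (x 2 P)) /\
  forall i, b i P = b i (canon_pent (x 2 P)).
Proof.
intros [[HM Hconv] Hb].
destruct (strictly_convex_sign P Hconv) as (e & He & Ho).
assert (Hk2 : sq_dist (A3 P) (A5 P) = k ^ 2).
{ rewrite <- Hb. unfold b, dist. rewrite pow2_sqrt; [reflexivity|apply sq_dist_nonneg]. }
assert (Hk : 0 < k).
{ rewrite <- Hb. apply sqrt_lt_R0. apply (sq_dist_pos_of_orient (A2 P)).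
  exact (neq0_of_mul_pos e _ (Ho 2%nat 3%nat ltac:(lia) ltac:(lia))). }
pose proof (canon_eq_frame P e He HM Hk Hk2 (Ho 5%nat 3%nat ltac:(lia) ltac:(lia))
  (Ho 1%nat 2%nat ltac:(lia) ltac:(lia)) (Ho 3%nat 2%nat ltac:(lia) ltac:(lia))) as Hv.
split; [exact Hk|split; [|split]].
- rewrite x2_sq_dist. apply (sq_dist_pos_of_orient (A5 P)).
  exact (neq0_of_mul_pos e _ (Ho 5%nat 3%nat ltac:(lia) ltac:(lia))).
- intros i j Hi Hj. rewrite !Hv, orient_frame; auto.
- intros i. unfold b, dist. fold (sq_dist (vert P (i + 4)) (vert P (i + 1))).
  fold (sq_dist (vert (canon_pent (x 2 P)) (i + 4)) (vert (canon_pent (x 2 P)) (i + 1))).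
  rewrite !Hv, sq_dist_frame; auto.
Qed.

Lemma canon_in_slice t : 0 < k -> 0 < t -> convex_ccw (canon_pent t) ->
  slice_int a k (canon_pent t) /\ x 2 (canon_pent t) = t.
Proof.
intros Hk Ht Hc.
destruct (canon_convex_pos t Hk Ht Hc) as (G1 & G2 & G3 & _).
destruct (canon_sides t Hk Ht (Rlt_le _ _ G1) (Rlt_le _ _ G2) (Rlt_le _ _ G3))
  as (E1 & E2 & E3 & E4 & E5 & Et).
assert (Hside : forall i, (1 <= i <= 5)%nat ->
  dist (vert (canon_pent t) i) (vert (canon_pent t) (i + 1)) = a i).
{ intros i Hi. unfold dist. fold (sq_dist (vert (canon_pent t) i) (vert (canon_pent t) (i + 1))).
  assert (Hi' : (i = 1 \/ i = 2 \/ i = 3 \/ i = 4 \/ i = 5)%nat) by lia.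
  apply sqrt_eq_sq; [apply Rlt_le, a_pos, Hi|].
  destruct Hi' as [->|[->|[->|[->| ->]]]]; assumption. }
split; [split; [split; [exact Hside|left; exact Hc]|]|].
- unfold b, dist. apply sqrt_eq_sq; [lra|]. unfold canon_pent; simpl. ring.
- rewrite x2_sq_dist. exact Et.
Qed.

(* The configuration chosen by [b_of_x2] is arbitrary, but congruent to the normal form. *)
Lemma b_of_x2_canon i t : 0 < k -> 0 < t -> convex_ccw (canon_pent t) ->
  b_of_x2 a k i t = b i (canon_pent t).
Proof.
intros Hk Ht Hc. unfold b_of_x2.
destruct (epsilon_spec (inhabits origin_pent) (fun P => slice_int a k P /\ x 2 P = t)
  (ex_intro _ (canon_pent t) (canon_in_slice t Hk Ht Hc))) as [HS Hx].
destruct (slice_canon _ HS) as (_ & _ & _ & Hb). rewrite Hb, Hx. reflexivity.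
Qed.

Lemma b_canon t : 0 < k -> 0 < t -> 0 <= gram51 t -> 0 <= gram12 t -> 0 <= gram54 ->
  b 1 (canon_pent t) = sqrt (b1_sq t) /\ b 3 (canon_pent t) = sqrt (b3_sq t) /\
  b 5 (canon_pent t) = sqrt (b5_sq t).
Proof.
intros Hk Ht H1 H2 H3.
destruct (canon_diagonals t Hk Ht H1 H2 H3) as (E1 & E3 & E5).
set (C := canon_pent t) in *.
change (b 1 C) with (sqrt (sq_dist (A5 C) (A2 C))).
change (b 3 C) with (sqrt (sq_dist (A2 C) (A4 C))).
change (b 5 C) with (sqrt (sq_dist (A4 C) (A1 C))).
rewrite E1, E3, E5. auto.
Qed.

Lemma b_sq_pos_of_convex t : 0 < k -> 0 < t -> convex_ccw (canon_pent t) ->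
  0 < b1_sq t /\ 0 < b3_sq t /\ 0 < b5_sq t.
Proof.
intros Hk Ht Hc. destruct (canon_convex_pos t Hk Ht Hc) as (G1 & G2 & G3 & _).
destruct (canon_diagonals t Hk Ht (Rlt_le _ _ G1) (Rlt_le _ _ G2) (Rlt_le _ _ G3))
  as (E1 & E3 & E5).
rewrite <- E1, <- E3, <- E5.
split; [|split]; eapply sq_dist_pos_of_orient, Rgt_not_eq, Rlt_gt;
  [exact (Hc 4%nat 3%nat ltac:(lia) ltac:(lia)) | exact (Hc 1%nat 3%nat ltac:(lia) ltac:(lia))
  | exact (Hc 3%nat 3%nat ltac:(lia) ltac:(lia))].
Qed.

Lemma canon_coord_continuity n t : 0 < k -> 0 < t -> 0 < gram51 t -> 0 < gram12 t ->
  continuity_pt (fun s => fst (vert (canon_pent s) n)) t /\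
  continuity_pt (fun s => snd (vert (canon_pent s) n)) t.
Proof.
intros Hk Ht Hg1 Hg2.
pose proof (is_derive_s51 t Hg1) as E1. pose proof (is_derive_s12 t Hg2) as E2.
unfold vert. destruct (n mod 5)%nat as [|[|[|[|[|m]]]]]; unfold canon_pent;
  cbn [fst snd A1 A2 A3 A4 A5];
  split; apply continuity_pt_of_ex_derive; unfold c51, c12; auto_derive;
  repeat split; try (eexists; eassumption); nra.
Qed.

Lemma canon_convex_near t0 : 0 < k -> 0 < t0 -> convex_ccw (canon_pent t0) ->
  locally t0 (fun t => 0 < t /\ convex_ccw (canon_pent t)).
Proof.
intros Hk Ht Hc. destruct (canon_convex_pos t0 Hk Ht Hc) as (G1 & G2 & _).
set (Q := fun i j t => (1 <= i <= 5)%nat -> (2 <= j <= 4)%nat ->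
  0 < orient (vert (canon_pent t) i) (vert (canon_pent t) (i + 1)) (vert (canon_pent t) (i + j))).
assert (Hij : forall i j, locally t0 (Q i j)).
{ intros i j. destruct (classic ((1 <= i <= 5)%nat /\ (2 <= j <= 4)%nat)) as [[Hi Hj]|Hn].
  - eapply filter_imp; [intros t Hpos _ _; exact Hpos|].
    apply locally_pos; [|exact (Hc i j Hi Hj)].
    apply continuity_pt_filterlim, continuity_pt_orient; apply canon_coord_continuity; assumption.
  - apply filter_forall. intros t Hi Hj. tauto. }
assert (HQ : locally t0 (fun t => forall i, (i < 6)%nat -> forall j, (j < 5)%nat -> Q i j t)).
{ apply (locally_forall_lt (fun i t => forall j, (j < 5)%nat -> Q i j t)). intros i _.
  apply (locally_forall_lt (Q i)). intros j _. apply Hij. }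
apply filter_and.
- apply locally_pos; [apply continuous_id|exact Ht].
- eapply filter_imp; [|exact HQ].
  intros t H i j Hi Hj. apply (H i ltac:(lia) j ltac:(lia) Hi Hj).
Qed.

Lemma grams_pos_between t1 t2 t : t1 <= t <= t2 ->
  0 < gram51 t1 -> 0 < gram12 t1 -> 0 < gram51 t2 -> 0 < gram12 t2 ->
  0 < gram51 t /\ 0 < gram12 t.
Proof.
unfold gram51, gram12, c51, c12. intros Ht ? ? ? ?.
split; eapply concave_gram_pos; eassumption.
Qed.

Lemma orients_continuous t : 0 < t -> 0 < gram51 t -> 0 < gram12 t ->
  continuous o235 t /\ continuous o125 t /\ continuous o451 t /\ continuous o234 t.
Proof.
intros Ht Hg1 Hg2.
pose proof (is_derive_s51 t Hg1) as E1. pose proof (is_derive_s12 t Hg2) as E2.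
repeat split; apply continuous_of_ex_derive; unfold o234, o235, o125, o451, c51, c12;
  auto_derive; repeat split; eexists; eassumption.
Qed.

Lemma b_of_x2_derivative_signs P : slice_int a k P ->
  (exists d, is_derive (b_of_x2 a k 1) (x 2 P) d /\ d < 0) /\
  (exists d, is_derive (b_of_x2 a k 3) (x 2 P) d /\ d < 0) /\
  (exists d, is_derive (b_of_x2 a k 5) (x 2 P) d /\ 0 < d).
Proof.
intros HS. destruct (slice_canon P HS) as (Hk & Ht & Hc & _).
set (t := x 2 P) in *.
destruct (canon_convex_pos t Hk Ht Hc) as (G1 & G2 & G3 & O235 & O125 & O451 & O234).
destruct (b_sq_pos_of_convex t Hk Ht Hc) as (B1 & B3 & B5).
assert (Hnear : locally t (fun s => sqrt (b1_sq s) = b_of_x2 a k 1 s /\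
  sqrt (b3_sq s) = b_of_x2 a k 3 s /\ sqrt (b5_sq s) = b_of_x2 a k 5 s)).
{ eapply filter_imp; [|exact (canon_convex_near t Hk Ht Hc)]. intros s [Hs Hcs].
  destruct (canon_convex_pos s Hk Hs Hcs) as (G1' & G2' & G3' & _).
  rewrite !b_of_x2_canon by assumption.
  destruct (b_canon s Hk Hs (Rlt_le _ _ G1') (Rlt_le _ _ G2') (Rlt_le _ _ G3')) as (E1 & E3 & E5).
  rewrite E1, E3, E5. auto. }
split; [|split].
- destruct (is_derive_sqrt_same_sign b1_sq (b_of_x2 a k 1) t (d_b1_sq t)
    (filter_imp _ _ (fun s H => proj1 H) Hnear) (is_derive_b1_sq t Ht G1 G2) B1)
    as (d & Hd & Hneg & _).
  exists d. split; [exact Hd|]. apply Hneg, d_b1_sq_neg; assumption.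
- destruct (is_derive_sqrt_same_sign b3_sq (b_of_x2 a k 3) t (d_b3_sq t)
    (filter_imp _ _ (fun s H => proj1 (proj2 H)) Hnear) (is_derive_b3_sq t Hk Ht G1 G2) B3)
    as (d & Hd & Hneg & _).
  exists d. split; [exact Hd|]. apply Hneg, d_b3_sq_neg; assumption.
- destruct (is_derive_sqrt_same_sign b5_sq (b_of_x2 a k 5) t (d_b5_sq t)
    (filter_imp _ _ (fun s H => proj2 (proj2 H)) Hnear) (is_derive_b5_sq t Hk G1) B5)
    as (d & Hd & _ & Hpos).
  exists d. split; [exact Hd|]. apply Hpos, d_b5_sq_pos; assumption.
Qed.

Section Between.

Variables tP tQ : R.
Hypotheses (Hk : 0 < k) (HtP : 0 < tP) (HPQ : tP <= tQ).
Hypotheses (HcP : convex_ccw (canon_pent tP)) (HcQ : convex_ccw (canon_pent tQ)).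

Lemma between_pos s : tP <= s <= tQ -> 0 < s /\ 0 < gram51 s /\ 0 < gram12 s.
Proof.
intros Hs. destruct (canon_convex_pos tP Hk HtP HcP) as (G1P & G2P & _).
destruct (canon_convex_pos tQ Hk ltac:(lra) HcQ) as (G1Q & G2Q & _).
split; [lra|]. apply (grams_pos_between tP tQ); assumption.
Qed.

Lemma o235_o125_pos_between s : tP <= s <= tQ -> 0 < o235 s /\ 0 < o125 s.
Proof.
destruct (canon_convex_pos tP Hk HtP HcP) as (G1 & G2 & _ & O235 & O125 & _).
apply (positive_until_barrier b1_sq d_b1_sq); auto.
- intros r Hr. destruct (between_pos r Hr) as (? & ? & ?).
  destruct (orients_continuous r) as (? & ? & _); auto.
- intros r Hr. destruct (between_pos r Hr) as (? & ? & ?). apply is_derive_b1_sq; assumption.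
- intros r Hr ? ?. destruct (between_pos r Hr) as (? & ? & ?). apply d_b1_sq_neg; assumption.
- intros r Hr _ _ Hz. destruct (between_pos r Hr) as (Hr0 & Hg1 & Hg2).
  destruct (Rmult_integral _ _ Hz) as [Z|Z].
  + rewrite (proj2 (b1_sq_triangle_A3 r Hk Hr0 Hg1 Hg2) Z).
    apply (b1_sq_triangle_A3 tP Hk HtP G1 G2).
  + rewrite (proj2 (b1_sq_triangle_A1 r Hr0 Hg1 Hg2) Z).
    apply (b1_sq_triangle_A1 tP HtP G1 G2).
Qed.

Lemma o234_pos_between s : tP <= s <= tQ -> 0 < o234 s.
Proof.
destruct (canon_convex_pos tP Hk HtP HcP) as (G1 & G2 & G3 & O235 & _ & _ & O234).
intros Hs. refine (proj1 (positive_until_barrier b3_sq d_b3_sq o234 (fun _ => 1) tP tQ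
  _ _ _ _ O234 Rlt_0_1 s Hs)).
- intros r Hr. destruct (between_pos r Hr) as (? & ? & ?).
  split; [apply orients_continuous; assumption|apply continuous_const].
- intros r Hr. destruct (between_pos r Hr) as (? & ? & ?). apply is_derive_b3_sq; assumption.
- intros r Hr ? _. destruct (between_pos r Hr) as (? & ? & ?).
  apply d_b3_sq_neg; try assumption. apply o235_o125_pos_between, Hr.
- intros r Hr _ _ Hz. rewrite Rmult_1_r in Hz. destruct (between_pos r Hr) as (Hr0 & Hg1 & Hg2).
  rewrite (proj2 (b3_sq_triangle_A3 r Hk Hr0 Hg1 Hg2 G3 (proj1 (o235_o125_pos_between r Hr))) Hz).
  apply (b3_sq_triangle_A3 tP Hk HtP G1 G2 G3 O235).
Qed.

Lemma o451_pos_between s : tP <= s <= tQ -> 0 < o451 s.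
Proof.
destruct (canon_convex_pos tQ Hk ltac:(lra) HcQ) as (G1 & _ & G3 & _ & _ & O451 & _).
intros Hs. set (c := tP + tQ).
(* b5 increases, so the barrier argument is run backwards from tQ. *)
replace s with (c - (c - s)) by ring.
refine (proj1 (positive_until_barrier (fun r => b5_sq (c - r)) (fun r => - d_b5_sq (c - r))
  (fun r => o451 (c - r)) (fun _ => 1) tP tQ _ _ _ _ _ Rlt_0_1 (c - s) ltac:(unfold c; lra))).
- intros r Hr. destruct (between_pos (c - r) ltac:(unfold c; lra)) as (? & ? & ?).
  split; [apply continuous_reflect, orients_continuous; assumption|apply continuous_const].
- intros r Hr. destruct (between_pos (c - r) ltac:(unfold c; lra)) as (? & ? & ?).
  apply is_derive_reflect, is_derive_b5_sq; assumption.
- intros r Hr ? _. destruct (between_pos (c - r) ltac:(unfold c; lra)) as (? & ? & ?).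
  apply Ropp_lt_gt_0_contravar, d_b5_sq_pos; assumption.
- intros r Hr _ _ Hz. rewrite Rmult_1_r in Hz.
  destruct (between_pos (c - r) ltac:(unfold c; lra)) as (_ & Hg1 & _).
  rewrite (proj2 (b5_sq_triangle_A5 (c - r) Hk Hg1 G3) Hz).
  replace (c - tP) with tQ by (unfold c; ring). apply (b5_sq_triangle_A5 tQ Hk G1 G3).
- replace (c - tP) with tQ by (unfold c; ring). exact O451.
Qed.

Lemma b_sq_monotone_between : tP < tQ ->
  b1_sq tQ < b1_sq tP /\ b3_sq tQ < b3_sq tP /\ b5_sq tP < b5_sq tQ.
Proof.
intros Hlt. split; [|split].
- apply (decr_of_derive_neg b1_sq d_b1_sq); [exact Hlt| |].
  + intros r Hr. destruct (between_pos r Hr) as (? & ? & ?). apply is_derive_b1_sq; assumption.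
  + intros r Hr. destruct (between_pos r ltac:(lra)) as (? & ? & ?).
    destruct (o235_o125_pos_between r ltac:(lra)). apply d_b1_sq_neg; assumption.
- apply (decr_of_derive_neg b3_sq d_b3_sq); [exact Hlt| |].
  + intros r Hr. destruct (between_pos r Hr) as (? & ? & ?). apply is_derive_b3_sq; assumption.
  + intros r Hr. destruct (between_pos r ltac:(lra)) as (? & ? & ?).
    apply d_b3_sq_neg; try assumption.
    * apply o235_o125_pos_between. lra.
    * apply o234_pos_between. lra.
- apply Ropp_lt_cancel.
  apply (decr_of_derive_neg (fun r => - b5_sq r) (fun r => - d_b5_sq r)); [exact Hlt| |].
  + intros r Hr. destruct (between_pos r Hr) as (? & ? & ?).
    apply (is_derive_opp b5_sq), is_derive_b5_sq; assumption.
  + intros r Hr. destruct (between_pos r ltac:(lra)) as (? & ? & ?).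
    apply Ropp_lt_gt_0_contravar, d_b5_sq_pos; try assumption. apply o451_pos_between. lra.
Qed.

End Between.

Lemma slice_b_monotone P Q : slice_int a k P -> slice_int a k Q -> x 2 P < x 2 Q ->
  b 1 Q < b 1 P /\ b 3 Q < b 3 P /\ b 5 P < b 5 Q.
Proof.
intros HP HQ Hlt.
destruct (slice_canon P HP) as (Hk & HtP & HcP & HbP).
destruct (slice_canon Q HQ) as (_ & HtQ & HcQ & HbQ).
rewrite !HbP, !HbQ.
destruct (b_sq_pos_of_convex _ Hk HtP HcP) as (B1P & B3P & B5P).
destruct (b_sq_pos_of_convex _ Hk HtQ HcQ) as (B1Q & B3Q & B5Q).
destruct (canon_convex_pos _ Hk HtP HcP) as (G1P & G2P & G3 & _).
destruct (canon_convex_pos _ Hk HtQ HcQ) as (G1Q & G2Q & _).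
destruct (b_canon _ Hk HtP (Rlt_le _ _ G1P) (Rlt_le _ _ G2P) (Rlt_le _ _ G3)) as (E1P & E3P & E5P).
destruct (b_canon _ Hk HtQ (Rlt_le _ _ G1Q) (Rlt_le _ _ G2Q) (Rlt_le _ _ G3)) as (E1Q & E3Q & E5Q).
rewrite E1P, E3P, E5P, E1Q, E3Q, E5Q.
destruct (b_sq_monotone_between _ _ Hk HtP (Rlt_le _ _ Hlt) HcP HcQ Hlt) as (M1 & M3 & M5).
repeat split; apply sqrt_lt_1_alt; lra.
Qed.

End Canonical.

Theorem lemma5 (a : nat -> R) (k : R) :
  (forall i : nat, (1 <= i <= 5)%nat -> 0 < a i) ->
  (forall P : pent, slice_int a k P ->
     (exists d, derivable_pt_lim (b_of_x2 a k 1) (x 2 P) d /\ d < 0) /\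
     (exists d, derivable_pt_lim (b_of_x2 a k 3) (x 2 P) d /\ d < 0) /\
     (exists d, derivable_pt_lim (b_of_x2 a k 5) (x 2 P) d /\ 0 < d)) /\
  (forall P Q : pent, slice_int a k P -> slice_int a k Q -> x 2 P < x 2 Q ->
     b 1 Q < b 1 P /\ b 3 Q < b 3 P /\ b 5 P < b 5 Q).
Proof.
intros Ha. split.
- intros P HP.
  destruct (b_of_x2_derivative_signs a k Ha P HP)
    as ((d1 & D1 & S1) & (d3 & D3 & S3) & (d5 & D5 & S5)).
  split; [|split]; eexists; (split; [apply is_derive_Reals; eassumption|eassumption]).
- intros P Q HP HQ Hlt. exact (slice_b_monotone a k Ha P Q HP HQ Hlt).
Qed.
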